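(* Let $(R,\mathfrak{m},k)$ be a complete Noetherian local ring and $E = E_R(k)$. Let $p$ be a pair operation on submodules of $E$. Then for any ideal $I$ of $R$, $p^{\mathrm{sd}}(I,R) = \operatorname{ann}_R (p(\operatorname{ann}_E(I),E))$. In particular, $p^{\mathrm{sd}}(R,R) = \operatorname{ann}_R p(0,E)$. If $p$ is defined at least on all pairs of Artinian modules (rather than just those of the form $(D,E)$) and is functorial, then $p^{\mathrm{sd}}(R,R)$ multiplies $p(A,B)$ into $A$ for every pair $(A,B)$ on which $p$ is defined, so long as $B/A$ is Artinian.
   Context: $(-)^\vee = \operatorname{Hom}_R(-,E)$ is Matlis duality. A pair operation $p$ on a class of pairs $(L,M)$, $L\subseteq M$, of Matlis-dualizable modules assigns a submodule $p(L,M)\subseteq M$ compatibly with isomorphisms of the ambient module. $p$ is functorial if $g(p(L,M)) \subseteq p(g(L),M')$ for every $R$-linear $g:M\to M'$. For $N\subseteq M$, $(M/N)^\vee$ is identified with $\{g\in M^\vee \mid g(N)=0\}$, and with $\eta_B: B\to B^{\vee\vee}$ the Matlis duality isomorphism, the smile dual of $p$ is $p^{\mathrm{sd}}(A,B) := \eta_B^{-1}\big((B^\vee / p((B/A)^\vee,B^\vee))^\vee\big)$; equivalently $x\in p^{\mathrm{sd}}(A,B)$ iff $g(x)=0$ for all $g \in p((B/A)^\vee,B^\vee)$. Here $R^\vee$ is identified with $E$ via $g\mapsto g(1)$. *)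

From HB Require Import structures.
From mathcomp Require Import all_boot all_order all_algebra.
From mathcomp Require Import boolp classical_sets.
Set Implicit Arguments. Unset Strict Implicit. Unset Printing Implicit Defensive.
Import GRing.Theory.
Local Open Scope ring_scope.
Local Open Scope classical_set_scope.

Section HomModule.
Variable R : comNzRingType.

Definition is_lin (M N : lmodType R) (f : M -> N) :=
  forall (a : R) (x y : M), f (a *: x + y) = a *: f x + f y.

Variables B E : lmodType R.

Record hom := Hom { homf :> B -> E; homP : is_lin homf }.

Lemma hom_ext (f g : hom) : (forall x, f x = g x) -> f = g.
Proof.
case: f => f fP; case: g => g gP /= fg.
have efg : f = g by apply: funext.
subst g; by rewrite (Prop_irrelevance fP gP).
Qed.

HB.instance Definition _ := gen_eqMixin hom.
HB.instance Definition _ := gen_choiceMixin hom.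

Lemma hom0_lin : is_lin (fun _ : B => (0 : E)).
Proof. by move=> a x y; rewrite scaler0 addr0. Qed.
Definition hom0 := Hom hom0_lin.

Lemma homN_lin (f : hom) : is_lin (fun x => - f x).
Proof. by move=> a x y; rewrite homP opprD scalerN. Qed.
Definition homN f := Hom (homN_lin f).

Lemma homD_lin (f g : hom) : is_lin (fun x => f x + g x).
Proof.
move=> a x y; rewrite !homP scalerDr -!addrA; congr (_ + _).
by rewrite addrCA.
Qed.
Definition homD f g := Hom (homD_lin f g).

Lemma homZ_lin (c : R) (f : hom) : is_lin (fun x => c *: f x).
Proof. by move=> a x y; rewrite homP scalerDr !scalerA mulrC. Qed.
Definition homZ c f := Hom (homZ_lin c f).

Lemma homD_A : associative homD.
Proof. by move=> f g h; apply: hom_ext => x /=; rewrite addrA. Qed.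
Lemma homD_C : commutative homD.
Proof. by move=> f g; apply: hom_ext => x /=; rewrite addrC. Qed.
Lemma homD_0 : left_id hom0 homD.
Proof. by move=> f; apply: hom_ext => x /=; rewrite add0r. Qed.
Lemma homD_N : left_inverse hom0 homN homD.
Proof. by move=> f; apply: hom_ext => x /=; rewrite addNr. Qed.

HB.instance Definition _ :=
  GRing.isZmodule.Build hom homD_A homD_C homD_0 homD_N.

Lemma homZ_A a b (f : hom) : homZ a (homZ b f) = homZ (a * b) f.
Proof. by apply: hom_ext => x /=; rewrite scalerA. Qed.
Lemma homZ_1 : left_id 1 homZ.
Proof. by move=> f; apply: hom_ext => x /=; rewrite scale1r. Qed.
Lemma homZ_Dr : right_distributive homZ +%R.
Proof. by move=> a f g; apply: hom_ext => x /=; rewrite scalerDr. Qed.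
Lemma homZ_Dl (f : hom) : {morph homZ^~ f : a b / a + b}.
Proof. by move=> a b; apply: hom_ext => x /=; rewrite scalerDl. Qed.

HB.instance Definition _ :=
  GRing.Zmodule_isLmodule.Build R hom homZ_A homZ_1 homZ_Dr homZ_Dl.

Lemma hom_addE (f g : hom) x : (f + g) x = f x + g x. Proof. by []. Qed.
Lemma hom_scaleE a (f : hom) x : (a *: f) x = a *: f x. Proof. by []. Qed.

End HomModule.

Notation dual E M := (hom M E).

Section Notions.
Variable R : comNzRingType.

Definition submodule (M : lmodType R) (L : set M) :=
  L 0 /\ forall (a : R) (x y : M), L x -> L y -> L (a *: x + y).

Definition ideal (I : set R) := @submodule R^o I.

Definition maximal_ideal (m : set R) :=
  [/\ ideal m, ~ m 1 &
      forall J : set R, ideal J -> m `<=` J -> ~ J 1 -> J = m].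

Definition local_ring_with (m : set R) :=
  maximal_ideal m /\ forall m' : set R, maximal_ideal m' -> m' = m.

Definition noetherian_ring :=
  forall I : nat -> set R, (forall n, ideal (I n)) ->
    (forall n, I n `<=` I n.+1) -> exists N, forall n, (N <= n)%N -> I n = I N.

Fixpoint ideal_pow (m : set R) (n : nat) : set R :=
  if n is n'.+1 then
    [set x | forall J : set R, ideal J ->
        (forall a b, ideal_pow m n' a -> m b -> J (a * b)) -> J x]
  else setT.

Definition complete_wrt (m : set R) :=
  (forall x : R, (forall n, ideal_pow m n x) -> x = 0) /\
  forall x : nat -> R, (forall n, ideal_pow m n (x n.+1 - x n)) ->
    exists y : R, forall n, ideal_pow m n (y - x n).

Definition injective_module (E : lmodType R) :=
  forall (M N : lmodType R) (f : M -> N) (g : M -> E),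
    is_lin f -> injective f -> is_lin g ->
    exists h : N -> E, is_lin h /\ forall x, h (f x) = g x.

(* E is an injective hull E_R(k) of the residue field k = R/m: E is injective
   and contains a copy R e0 of k (i.e. ann_R e0 = m) which is an essential
   submodule of E. *)
Definition injective_hull_residue (m : set R) (E : lmodType R) :=
  injective_module E /\
  exists e0 : E,
    (forall r : R, r *: e0 = 0 <-> m r) /\
    forall N : set E, submodule N -> (exists x, N x /\ x <> 0) ->
      exists x, [/\ N x, x <> 0 & exists r : R, x = r *: e0].

Definition artinian (M : lmodType R) :=
  forall L : nat -> set M, (forall n, submodule (L n)) ->
    (forall n, L n.+1 `<=` L n) -> exists N, forall n, (N <= n)%N -> L n = L N.

(* B/A is Artinian: DCC on the submodules of B containing A
   (these correspond to the submodules of B/A). *)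
Definition artinian_quotient (B : lmodType R) (A : set B) :=
  forall L : nat -> set B, (forall n, submodule (L n)) -> (forall n, A `<=` L n) ->
    (forall n, L n.+1 `<=` L n) -> exists N, forall n, (N <= n)%N -> L n = L N.

Variable E : lmodType R.

Lemma eval_lin (B : lmodType R) (x : B) : is_lin (fun g : dual E B => g x).
Proof. by []. Qed.
Definition matlis_eta (B : lmodType R) (x : B) : dual E (dual E B) :=
  Hom (eval_lin x).

Definition matlis_dualizable (B : lmodType R) := bijective (@matlis_eta B).

(* A pair operation: dom M L says p is defined on (L, M); p M L is p(L, M). *)
Definition pair_operation
    (dom : forall M : lmodType R, set M -> Prop)
    (p : forall M : lmodType R, set M -> set M) :=
  (forall (M : lmodType R) (L : set M), dom M L ->
     [/\ submodule L, matlis_dualizable M & submodule (p M L)]) /\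
  (forall (M M' : lmodType R) (phi : M -> M') (L : set M),
     is_lin phi -> bijective phi -> dom M L ->
     dom M' (phi @` L) /\ p M' (phi @` L) = phi @` p M L).

Definition functorial
    (dom : forall M : lmodType R, set M -> Prop)
    (p : forall M : lmodType R, set M -> set M) :=
  forall (M M' : lmodType R) (g : M -> M') (L : set M),
    is_lin g -> dom M L -> dom M' (g @` L) -> g @` p M L `<=` p M' (g @` L).

(* (M/N)^v identified with the maps in M^v vanishing on N. *)
Definition dual_quot (B : lmodType R) (A : set B) : set (dual E B) :=
  [set g | forall a, A a -> g a = 0].

Definition smile_dual (p : forall M : lmodType R, set M -> set M)
    (B : lmodType R) (A : set B) : set B :=
  [set x | forall g : dual E B, p (dual E B) (dual_quot A) g -> g x = 0].

Definition annE (I : set R) : set E := [set e | forall r, I r -> r *: e = 0].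
Definition annR (M : lmodType R) (S : set M) : set R :=
  [set r | forall x, S x -> r *: x = 0].

End Notions.
Arguments annE {R} E I _.

From Pilot Require Import Defs.
From HB Require Import structures.
From mathcomp Require Import all_boot all_order all_algebra.
From mathcomp Require Import boolp classical_sets.
Set Implicit Arguments. Unset Strict Implicit. Unset Printing Implicit Defensive.
Import GRing.Theory.
Local Open Scope ring_scope.
Local Open Scope classical_set_scope.

(* Evaluation at 1 identifies Hom_R(R, E) with E, and (R/I)^v with ann_E I;
   since p commutes with isomorphisms, p((R/I)^v, R^v) is the image of
   p(ann_E I, E), which gives the formula for p^sd(I, R).
   For the last claim, let r kill p(0, E) and b lie in p(A, B) with r b not
   in A.  Pick e0 in E with ann_R e0 = m.  The map a + s (r b) |-> s e0 on
   A + R (r b) is well defined because (A :_R r b) is a proper ideal, hence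
   contained in m, and by injectivity of E it extends to g : B -> E vanishing
   on A with g (r b) = e0 <> 0.  Functoriality puts g b in p(g A, E) = p(0, E),
   so e0 = r (g b) = 0, a contradiction. *)

Section LinearMaps.
Variable R : comNzRingType.
Implicit Types M N : lmodType R.

Lemma is_lin0 M N (f : M -> N) : is_lin f -> f 0 = 0.
Proof.
move=> f_lin; have := f_lin 1 0 0; rewrite !scale1r addr0.
by move/(congr1 (fun z => z - f 0)); rewrite addrK subrr.
Qed.

Lemma is_linZ M N (f : M -> N) a x : is_lin f -> f (a *: x) = a *: f x.
Proof. by move=> f_lin; rewrite -[a *: x]addr0 f_lin (is_lin0 f_lin) addr0. Qed.

Lemma is_lin_regular N (f : R^o -> N) (r : R) : is_lin f -> f r = r *: f 1.
Proof.
by move=> f_lin; rewrite -is_linZ //; congr f; rewrite /GRing.scale /= mulr1.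
Qed.

End LinearMaps.

Section Submodules.
Variables (R : comNzRingType) (B : lmodType R).

Lemma submodule0 : submodule [set 0 : B].
Proof. by split=> //= a x y -> ->; rewrite scaler0 addr0. Qed.

Lemma submodule_annE (I : set R) : submodule (annE B I).
Proof.
split=> [r _|a x y Ix Iy r Ir]; first exact: scaler0.
by rewrite scalerDr scalerA mulrC -scalerA Ix // Iy // scaler0 addr0.
Qed.

Definition line_span (A : set B) (y : B) := [set x | exists s : R, A (x - s *: y)].

Lemma submodule_line_span A y : submodule A -> submodule (line_span A y).
Proof.
move=> [A0 A_lin]; split; first by exists 0; rewrite scale0r subr0.
move=> a x1 x2 [s1 A1] [s2 A2]; exists (a * s1 + s2).
by rewrite scalerDl -scalerA opprD addrACA -scalerBr; exact: A_lin.
Qed.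

Lemma submodule_line_coef (A : set B) (y : B) :
  submodule A -> ideal [set s : R | A (s *: y)].
Proof.
move=> [A0 A_lin]; split; first by rewrite /= scale0r.
by move=> a s t As At /=; rewrite scalerDl -scalerA; exact: A_lin.
Qed.

(* The unused proof argument lets the closure instance below be canonical. *)
Definition submod_pred (A : set B) of submodule A : {pred B} := fun x => `[< A x >].

Variables (A : set B) (sA : submodule A).

Lemma submod_predP : submod_closed (submod_pred sA).
Proof.
split; first by apply/asboolP; exact: sA.1.
by move=> a x y /asboolP Ax /asboolP Ay; apply/asboolP; exact: sA.2.
Qed.

HB.instance Definition _ := GRing.isSubmodClosed.Build R B (submod_pred sA)
  (GRing.submod_closed_semi submod_predP).

Definition submod_type := {x : B | x \in submod_pred sA}.
HB.instance Definition _ := [isSub for (val : submod_type -> B)].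
HB.instance Definition _ := [Choice of submod_type by <:].
HB.instance Definition _ := [SubChoice_isSubLmodule of submod_type by <:].

Lemma submod_valP (x : submod_type) : A (val x).
Proof. by apply/asboolP; exact: (valP x). Qed.

Lemma is_lin_submod_val : is_lin (val : submod_type -> B).
Proof. by []. Qed.

End Submodules.

Section Noetherian.
Variables (R : comNzRingType) (Rnoeth : noetherian_ring R).

Lemma noetherian_maximal_element (Q : set (set R)) (J : set R) :
  (forall I, Q I -> ideal I) -> Q J ->
  exists2 M, Q M & forall K, Q K -> M `<=` K -> K = M.
Proof.
move=> Q_ideal QJ; apply: contrapT => noMax.
have next (I : {I | Q I}) :
    {K : {I | Q I} | sval I `<=` sval K /\ sval K <> sval I}.
  apply: cid; apply: contrapT => Imax; apply: noMax; exists (sval I) => [|K QK IK].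
    exact: svalP.
  by apply: contrapT => KI; apply: Imax; exists (exist _ K QK).
pose chain n := sval (iter n (fun I => sval (next I)) (exist _ J QJ)).
have [N chainN] := Rnoeth (I := chain) (fun n => Q_ideal _ (svalP _))
                          (fun n => (svalP (next _)).1).
exact: (svalP (next _)).2 (chainN N.+1 (leqnSn N)).
Qed.

Lemma noetherian_maximal_ideal_above (J : set R) :
  ideal J -> ~ J 1 -> exists2 M, maximal_ideal M & J `<=` M.
Proof.
move=> J_ideal J1.
pose Q := [set I | [/\ ideal I, ~ I 1 & J `<=` I]].
have Q_ideal I : Q I -> ideal I by case.
have [M [M_ideal M1 JM] Mmax] :=
  noetherian_maximal_element Q_ideal (And3 J_ideal J1 (@subset_refl _ J)).
exists M => //; split=> // K K_ideal MK K1.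
by apply: Mmax => //=; split=> //; apply: subset_trans MK.
Qed.

Lemma local_proper_ideal_sub (m : set R) (J : set R) :
  local_ring_with m -> ideal J -> ~ J 1 -> J `<=` m.
Proof.
move=> [_ m_unique] J_ideal J1.
by have [M /m_unique <-] := noetherian_maximal_ideal_above J_ideal J1.
Qed.

End Noetherian.

Section ExtendLineFunctional.
Variables (R : comNzRingType) (E : lmodType R) (E_inj : injective_module E).
Variables (B : lmodType R) (A : set B) (sA : submodule A) (y : B) (e : E).
Hypothesis e_ann : forall s : R, A (s *: y) -> s *: e = 0.

Let sP := submodule_line_span y sA.

Let coef (x : submod_type sP) : R := sval (cid (submod_valP x)).

Lemma line_coefE (x : submod_type sP) (s : R) :
  A (val x - s *: y) -> coef x *: e = s *: e.
Proof.
rewrite /coef; case: cid => c /= Axc Axs.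
apply/eqP; rewrite -subr_eq0 -scalerBl; apply/eqP/e_ann.
have -> : (c - s) *: y = (val x - s *: y) + (- 1) *: (val x - c *: y).
  by rewrite scaleN1r opprB [RHS]addrC -addrA addKr scalerBl.
by rewrite addrC; exact: sA.2 (-1) _ _ Axc Axs.
Qed.

Lemma injective_extend_line_functional :
  exists g : B -> E, [/\ is_lin g, forall a, A a -> g a = 0 & g y = e].
Proof.
pose g0 x := coef x *: e.
have g0_lin : is_lin g0.
  move=> a x1 x2; rewrite /g0 (line_coefE (s := a * coef x1 + coef x2)).
    by rewrite scalerDl scalerA.
  rewrite /= scalerDl -scalerA opprD addrACA -scalerBr.
  by apply: sA.2; rewrite /coef; case: cid.
have [g [g_lin g_ext]] := E_inj (@is_lin_submod_val _ _ _ sP) val_inj g0_lin.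
exists g; split=> // [a Aa|].
  have Pa : a \in submod_pred sP by apply/asboolP; exists 0; rewrite scale0r subr0.
  rewrite -[a]/(val (exist _ a Pa : submod_type sP)) g_ext /g0.
  by rewrite (line_coefE (s := 0)) scale0r //= subr0.
have Py : y \in submod_pred sP.
  by apply/asboolP; exists 1; rewrite scale1r subrr; exact: sA.1.
rewrite -[y]/(val (exist _ y Py : submod_type sP)) g_ext /g0.
by rewrite (line_coefE (s := 1)) scale1r //= subrr; exact: sA.1.
Qed.

End ExtendLineFunctional.

Lemma injective_hull_separates (R : comNzRingType) (m : set R) (E : lmodType R)
    (B : lmodType R) (A : set B) (y : B) :
  local_ring_with m -> noetherian_ring R -> injective_hull_residue m E ->
  submodule A -> ~ A y ->
  exists g : B -> E, [/\ is_lin g, forall a, A a -> g a = 0 & g y <> 0].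
Proof.
move=> Rlocal Rnoeth [E_inj [e0 [e0_ann _]]] sA Ay.
have colon_sub_m := local_proper_ideal_sub Rnoeth Rlocal (submodule_line_coef y sA).
have e0_colon s : A (s *: y) -> s *: e0 = 0.
  by move=> Asy; apply/e0_ann/colon_sub_m; rewrite //= scale1r.
have [g [g_lin gA gy]] := injective_extend_line_functional E_inj sA e0_colon.
exists g; split=> //; rewrite gy => e0_0.
by have [_ m1 _] := Rlocal.1; apply: m1; apply/e0_ann; rewrite e0_0 scaler0.
Qed.

Section RegularDual.
Variables (R : comNzRingType) (E : lmodType R).

Lemma is_lin_scale_by (e : E) : is_lin (fun r : R^o => r *: e).
Proof. by move=> a x y; rewrite scalerDl scalerA. Qed.

Definition regular_dual_map (e : E) : dual E R^o :=
  Defs.Hom (is_lin_scale_by e).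

Lemma is_lin_regular_dual_map : is_lin regular_dual_map.
Proof.
by move=> a x y; apply: hom_ext => r /=; rewrite scalerDr !scalerA mulrC.
Qed.

Lemma regular_dual_mapK (g : dual E R^o) : regular_dual_map (g 1) = g.
Proof. by apply: hom_ext => r /=; rewrite (is_lin_regular r (homP g)). Qed.

Lemma bij_regular_dual_map : bijective regular_dual_map.
Proof.
exists (fun g : dual E R^o => g 1) => [e|g]; last exact: regular_dual_mapK.
by rewrite /= scale1r.
Qed.

Lemma regular_dual_map_annE (I : set R) :
  regular_dual_map @` annE E I = @dual_quot R E R^o I.
Proof.
apply/seteqP; split=> [_ [e Ie <-] r Ir|g gI]; first exact: Ie.
exists (g 1); last exact: regular_dual_mapK.
by move=> r Ir; rewrite -(is_lin_regular r (homP g)) gI.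
Qed.

End RegularDual.

Section PairOperation.
Variables (R : comNzRingType) (E : lmodType R).
(* Declared without implicit arguments, so that the module argument of [dom]
   and [p] stays explicit as in [pair_operation]. *)
Unset Implicit Arguments.
Variables (dom : forall M : lmodType R, set M -> Prop)
          (p : forall M : lmodType R, set M -> set M).
Hypotheses (p_op : pair_operation E dom p)
           (p_domE : forall D : set E, submodule D -> dom E D).
Set Implicit Arguments.

Lemma smile_dual_regular (I : set R) :
  @smile_dual R E p R^o I = annR (p E (annE E I)).
Proof.
have [_ p_iso] := p_op.2 _ _ _ _ (@is_lin_regular_dual_map _ E)
  (@bij_regular_dual_map _ E) (p_domE _ (submodule_annE E I)).
rewrite /smile_dual -regular_dual_map_annE p_iso.
apply/seteqP; split=> r /= rP => [e pe|_ [e pe <-]]; last exact: rP.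
by apply: (rP (regular_dual_map e)); exists e.
Qed.

Lemma smile_dual_regular_setT : @smile_dual R E p R^o setT = annR (p E [set 0]).
Proof.
rewrite smile_dual_regular; congr (annR (p E _)).
apply/seteqP; split=> e /= => [/(_ 1 I)|->]; first by rewrite scale1r.
by move=> r _; exact: scaler0.
Qed.

Lemma annR_p0_scale_mem (m : set R) (B : lmodType R) (A : set B) (r : R) (b : B) :
  local_ring_with m -> noetherian_ring R -> injective_hull_residue m E ->
  functorial dom p -> dom B A -> annR (p E [set 0]) r -> p B A b -> A (r *: b).
Proof.
move=> Rlocal Rnoeth E_hull p_fun dA r_ann pb.
have [sA _ _] := p_op.1 B A dA.
apply: contrapT => Arb.
have [g [g_lin gA grb]] := injective_hull_separates Rlocal Rnoeth E_hull sA Arb.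
have gA0 : g @` A = [set 0].
  apply/seteqP; split=> [_ [a Aa <-]|_ ->] /=; first exact: gA.
  by exists 0; [exact: sA.1 | exact: is_lin0 g_lin].
have dgA : dom E (g @` A) by rewrite gA0; exact: p_domE (submodule0 E).
have gb : p E [set 0] (g b).
  by rewrite -gA0; apply: (p_fun _ _ g A g_lin dA dgA); exists b.
by apply: grb; rewrite (is_linZ r b g_lin) r_ann.
Qed.

End PairOperation.

Theorem proposition3p6
    (R : comNzRingType) (m : set R) (E : lmodType R)
    (Hlocal : local_ring_with m) (Hnoeth : noetherian_ring R)
    (Hcompl : complete_wrt m) (HE : injective_hull_residue m E)
    (dom : forall M : lmodType R, set M -> Prop)
    (p : forall M : lmodType R, set M -> set M)
    (Hp : pair_operation E dom p)
    (HpE : forall D : set E, submodule D -> dom E D) :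
  (forall I : set R, ideal I ->
     @smile_dual R E p R^o I = annR (p E (annE E I))) /\
  @smile_dual R E p R^o setT = annR (p E [set 0]) /\
  ((forall (M : lmodType R) (L : set M), artinian M -> submodule L -> dom M L) ->
   functorial dom p ->
   forall (B : lmodType R) (A : set B), dom B A -> artinian_quotient A ->
     forall (r : R) (b : B), @smile_dual R E p R^o setT r -> p B A b -> A (r *: b)).
Proof.
have sd_setT := smile_dual_regular_setT Hp HpE.
split=> [I _|]; first exact: smile_dual_regular Hp HpE I.
split=> // _ p_fun B A dA _ r b; rewrite sd_setT.
exact: (annR_p0_scale_mem (r := r) (b := b) Hp HpE Hlocal Hnoeth HE p_fun dA).
Qed.
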